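(* Let $k\ge 1$ be an integer and $\beta,\gamma>0$, and put $R_0=\beta/\gamma$. For $\boldsymbol{y}=(y_1,\dots,y_k)\in\mathbb{R}^k$ and $\boldsymbol{\theta}=(\theta_1,\dots,\theta_k)\in\mathbb{R}^k$ define $$H_k(\boldsymbol{y},\boldsymbol{\theta})=\beta\Big(\sum_{m=1}^k y_m\Big)\Big(1-\sum_{m=1}^k y_m\Big)\big(e^{\theta_1}-1\big)+k\gamma\sum_{m=1}^{k-1}y_m\big(e^{-\theta_m+\theta_{m+1}}-1\big)+k\gamma\,y_k\big(e^{-\theta_k}-1\big),$$ and $$S_k(\boldsymbol{\theta})=\ln\Big(\frac{1}{k}\sum_{m=1}^k e^{\theta_m}\Big)-\frac{\gamma}{\beta}\Big(1-\frac{k}{\sum_{m=1}^k e^{\theta_m}}\Big).$$ Let $z^*$ be the unique positive real number with $\sum_{m=1}^k (z^* )^m=k\gamma/\beta$, let $\theta_k^*=\ln z^*$, and let $\boldsymbol{\theta}^*=(k,k-1,\dots,2,1)\,\theta_k^*\in\mathbb{R}^k$. Then: (i) for every $\boldsymbol{\theta}\in\mathbb{R}^k$, $H_k\big(\nabla S_k(\boldsymbol{\theta}),\boldsymbol{\theta}\big)=0$, where $\nabla S_k=(\partial S_k/\partial\theta_1,\dots,\partial S_k/\partial\theta_k)$; (ii) $S_k(\mathbf{0})=0$; (iii) $S_k(\boldsymbol{\theta}^* )=1-\frac{1}{R_0}-\ln R_0$.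
   Context: $H_k$ is the Hamiltonian associated with the SIS infection model with $k$ infectious stages (Erlang-distributed infectious periods), where $y_m$ is the scaled number of individuals in infectious stage $m$ and $\theta_m$ is the conjugate momentum variable. *)

From Stdlib Require Import Reals Lra.
Open Scope R_scope.

(* sumk k f = f 1 + f 2 + ... + f k  (indices start at 1; sumk 0 f = 0) *)
Fixpoint sumk (k : nat) (f : nat -> R) : R :=
  match k with
  | O => 0
  | S n => sumk n f + f (S n)
  end.

(* Vectors in R^k are functions nat -> R, only indices 1..k are relevant. *)

Definition Hk (k : nat) (beta gamma : R) (y th : nat -> R) : R :=
  beta * sumk k y * (1 - sumk k y) * (exp (th 1%nat) - 1)
  + INR k * gamma * sumk (k - 1) (fun m => y m * (exp (- th m + th (S m)) - 1))
  + INR k * gamma * y k * (exp (- th k) - 1).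

Definition Sk (k : nat) (beta gamma : R) (th : nat -> R) : R :=
  ln (/ INR k * sumk k (fun m => exp (th m)))
  - gamma / beta * (1 - INR k / sumk k (fun m => exp (th m))).

Definition upd (th : nat -> R) (m : nat) (t : R) : nat -> R :=
  fun j => if Nat.eq_dec j m then t else th j.

Definition is_gradient (k : nat) (F : (nat -> R) -> R) (th g : nat -> R) : Prop :=
  forall m : nat, (1 <= m <= k)%nat ->
    derivable_pt_lim (fun t => F (upd th m t)) (th m) (g m).

(* Every term of S_k depends on theta only through E = sum_m e^{theta_m}, so
   grad S_k = c * (e^{theta_1}, ..., e^{theta_k}) with c = S'(E) for a scalar
   profile S.  On such a y the transport terms of H_k telescope to
   k gamma c (1 - e^{theta_1}), leaving
   H_k = c (e^{theta_1} - 1) (beta E (1 - c E) - k gamma), and the particular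
   value c = 1/E - k gamma / (beta E^2) makes the last factor vanish.  At
   theta*, e^{theta*_m} = z*^{k-m+1}, so E = k gamma / beta = k / R_0. *)

From Stdlib Require Import Reals Lra Lia FunctionalExtensionality.
From Coquelicot Require Import Coquelicot.
Open Scope R_scope.

Lemma sumk_ext n f g :
  (forall j, (1 <= j <= n)%nat -> f j = g j) -> sumk n f = sumk n g.
Proof.
  induction n as [|n IH]; intros Hfg; simpl; [reflexivity|].
  rewrite IH, Hfg; [reflexivity|lia|intros; apply Hfg; lia].
Qed.

Lemma sumk_const n c : sumk n (fun _ => c) = INR n * c.
Proof. induction n as [|n IH]; simpl sumk; [simpl; ring|]. rewrite IH, S_INR; ring. Qed.

Lemma sumk_scal_r n c f : sumk n (fun j => f j * c) = sumk n f * c.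
Proof. induction n as [|n IH]; simpl; [ring|]. rewrite IH; ring. Qed.

Lemma sumk_pos n f : (1 <= n)%nat -> (forall j, 0 < f j) -> 0 < sumk n f.
Proof.
  intros Hn Hf; induction n as [|n IH]; [lia|]; simpl.
  destruct n as [|n]; [simpl; specialize (Hf 1%nat); lra|].
  specialize (IH ltac:(lia)); specialize (Hf (S (S n))); lra.
Qed.

Lemma sumk_telescope n f : sumk n (fun m => f (S m) - f m) = f (S n) - f 1%nat.
Proof. induction n as [|n IH]; simpl; [ring|]. rewrite IH; ring. Qed.

Lemma sumk_Sl n f : sumk (S n) f = f 1%nat + sumk n (fun m => f (S m)).
Proof.
  induction n as [|n IH]; [simpl; ring|].
  change (sumk (S (S n)) f) with (sumk (S n) f + f (S (S n))).
  rewrite IH; simpl; ring.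
Qed.

Lemma sumk_rev n f : sumk n (fun m => f (n - m + 1)%nat) = sumk n f.
Proof.
  induction n as [|n IH]; [reflexivity|].
  rewrite sumk_Sl; simpl sumk at 2.
  replace (S n - 1 + 1)%nat with (S n) by lia.
  change (sumk n (fun m => f (S n - S m + 1)%nat))
    with (sumk n (fun m => f (n - m + 1)%nat)).
  rewrite IH; ring.
Qed.

Lemma sumk_upd n (f : R -> R) th m t : (1 <= m <= n)%nat ->
  sumk n (fun j => f (upd th m t j)) = sumk n (fun j => f (th j)) - f (th m) + f t.
Proof.
  induction n as [|n IH]; intros Hm; [lia|]; simpl; unfold upd at 2.
  destruct (Nat.eq_dec (S n) m) as [<-|Hne].
  - rewrite (sumk_ext n _ (fun j => f (th j))); [ring|].
    intros j Hj; unfold upd; destruct (Nat.eq_dec j (S n)); [lia|reflexivity].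
  - rewrite IH by lia; ring.
Qed.

Lemma is_gradient_sum_exp k (F : R -> R) th dF :
  derivable_pt_lim F (sumk k (fun m => exp (th m))) dF ->
  is_gradient k (fun th' => F (sumk k (fun m => exp (th' m)))) th
    (fun m => exp (th m) * dF).
Proof.
  intros HF m Hm.
  set (C := sumk k (fun j => exp (th j)) - exp (th m)).
  replace (fun t => F (sumk k (fun j => exp (upd th m t j))))
    with (comp F (fun t => C + exp t))
    by (apply functional_extensionality; intros t; unfold comp, C;
        rewrite sumk_upd by exact Hm; reflexivity).
  rewrite Rmult_comm; apply derivable_pt_lim_comp.
  - replace (exp (th m)) with (0 + exp (th m)) by ring.
    apply derivable_pt_lim_plus; [apply derivable_pt_lim_const|apply derivable_pt_lim_exp].
  - unfold C; replace (_ - _ + _) with (sumk k (fun j => exp (th j))) by ring; exact HF.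
Qed.

Definition Sk_profile (k : nat) (beta gamma E : R) : R :=
  ln (/ INR k * E) - gamma / beta * (1 - INR k / E).

Lemma Sk_profile_derivative k beta gamma E :
  (1 <= k)%nat -> 0 < beta -> 0 < E ->
  derivable_pt_lim (Sk_profile k beta gamma) E
    (1 / E - gamma * INR k / (beta * E ^ 2)).
Proof.
  intros Hk1 Hb HE.
  assert (HK : 0 < INR k) by (apply lt_0_INR; lia).
  apply is_derive_Reals; unfold Sk_profile; auto_derive.
  - repeat split; try lra. apply Rmult_lt_0_compat; [apply Rinv_0_lt_compat|]; lra.
  - field; lra.
Qed.

Lemma Hk_exp_profile k beta gamma th c : (1 <= k)%nat ->
  let E := sumk k (fun m => exp (th m)) in
  Hk k beta gamma (fun m => exp (th m) * c) th
  = c * (exp (th 1%nat) - 1) * (beta * E * (1 - c * E) - INR k * gamma).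
Proof.
  intros Hk1 E; unfold Hk.
  rewrite sumk_scal_r; fold E.
  replace (sumk (k - 1) _) with (c * (exp (th k) - exp (th 1%nat))).
  - rewrite exp_Ropp; field; apply Rgt_not_eq, exp_pos.
  - pose proof (sumk_telescope (k - 1) (fun m => exp (th m))) as Htel.
    replace (S (k - 1)) with k in Htel by lia.
    rewrite <- Htel, Rmult_comm, <- sumk_scal_r.
    apply sumk_ext; intros j _.
    rewrite exp_plus, exp_Ropp; field; apply Rgt_not_eq, exp_pos.
Qed.

Theorem mainTheorem1 (k : nat) (beta gamma : R) :
  (1 <= k)%nat -> 0 < beta -> 0 < gamma ->
  (* (i) *)
  (forall th : nat -> R,
     exists g : nat -> R,
       is_gradient k (Sk k beta gamma) th g /\ Hk k beta gamma g th = 0)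
  (* (ii) *)
  /\ Sk k beta gamma (fun _ => 0) = 0
  (* (iii) *)
  /\ (forall zstar : R,
        0 < zstar ->
        sumk k (fun m => zstar ^ m) = INR k * gamma / beta ->
        Sk k beta gamma (fun m => INR (k - m + 1) * ln zstar)
        = 1 - 1 / (beta / gamma) - ln (beta / gamma)).
Proof.
  intros Hk1 Hb Hg.
  assert (HK : 0 < INR k) by (apply lt_0_INR; lia).
  split; [|split].
  - intros th.
    set (E := sumk k (fun m => exp (th m))).
    assert (HE : 0 < E) by (apply sumk_pos; [exact Hk1|intros; apply exp_pos]).
    exists (fun m => exp (th m) * (1 / E - gamma * INR k / (beta * E ^ 2))).
    split.
    + exact (is_gradient_sum_exp k _ th _ (Sk_profile_derivative k beta gamma E Hk1 Hb HE)).
    + rewrite Hk_exp_profile by exact Hk1; fold E.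
      replace (beta * E * _ - _) with 0 by (field; lra); ring.
  - unfold Sk; rewrite sumk_const, exp_0, Rmult_1_r, Rinv_l, ln_1 by lra.
    unfold Rdiv; rewrite Rinv_r by lra; ring.
  - intros z Hz Hsum; unfold Sk.
    replace (sumk k _) with (INR k * gamma / beta).
    + replace (/ INR k * (INR k * gamma / beta)) with (/ (beta / gamma)) by (field; lra).
      rewrite ln_Rinv by (apply Rdiv_lt_0_compat; lra).
      field; lra.
    + rewrite <- Hsum, <- (sumk_rev k (fun m => z ^ m)).
      apply sumk_ext; intros j _; rewrite <- Rpower_pow by exact Hz; reflexivity.
Qed.
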